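(* Let $S_1=\mathbb{R}/2\pi\mathbb{Z}$ and let $u:[0,T)\times S_1\to\mathbb{R}$ be a smooth solution of the Camassa–Holm equation $$\partial_t u-\tfrac14\partial_{txx}u+3\,\partial_x u\,u-\tfrac12\,\partial_{xx}u\,\partial_x u-\tfrac14\,\partial_{xxx}u\,u=0 .$$ On $N=S_1\times\mathbb{R}_{>0}$ with coordinates $(\theta,r)$ and the Euclidean metric in polar coordinates $h=r^2(\mathrm{d}\theta)^2+(\mathrm{d}r)^2$ (i.e. $N\cong\mathbb{R}^2\setminus\{0\}$), define the time-dependent vector field $$v(t,\theta,r)=u(t,\theta)\,\partial_\theta+\tfrac{r}{2}\,\partial_\theta u(t,\theta)\,\partial_r .$$ Then there exists a function $p:[0,T)\times N\to\mathbb{R}$ such that $$\partial_t v+\nabla_v v=-\nabla p,\qquad \operatorname{div}(\rho v)=0,\quad\text{with }\rho(\theta,r)=r^{-4},$$ where $\nabla$ is the Levi-Civita connection of $h$, $\nabla p$ the $h$-gradient, and $\operatorname{div}$ the Euclidean divergence (with respect to the area form $r\,\mathrm{d}r\wedge\mathrm{d}\theta$). Equivalently, $v$ solves the incompressible Euler equation for the density $r^{-4}\,r\,\mathrm{d}r\,\mathrm{d}\theta$.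
   Context: Here $\partial_x$ and $\partial_\theta$ both denote differentiation in the angular variable. The flow $\varphi$ of $u$ and the map $\Psi(\theta,r)=r\sqrt{\partial_\theta\varphi(\theta)}\,e^{i\varphi(\theta)}$ are related by $\partial_t\Psi\circ\Psi^{-1}=v$; this is not needed for the statement. *)

From Stdlib Require Import Reals Lra.
Open Scope R_scope.

Definition Dom (T t : R) : Prop := 0 <= t < T.

(** One-sided-aware derivative of f at x within a domain D (used for the time
    variable on [0,T), so that t = 0 is included). *)
Definition deriv_within (D : R -> Prop) (f : R -> R) (x l : R) : Prop :=
  forall eps : R, 0 < eps -> exists delta : R, 0 < delta /\
    forall h : R, h <> 0 -> D (x + h) -> Rabs h < delta ->
      Rabs ((f (x + h) - f x) / h - l) < eps.

Definition jcont (T : R) (f : R -> R -> R) : Prop :=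
  forall t x, Dom T t -> forall eps, 0 < eps -> exists delta, 0 < delta /\
    forall s y, Dom T s -> Rabs (s - t) < delta -> Rabs (y - x) < delta ->
      Rabs (f s y - f t x) < eps.

Fixpoint Ck (T : R) (k : nat) (f : R -> R -> R) : Prop :=
  match k with
  | O => jcont T f
  | S k' => jcont T f /\
      exists ft fx : R -> R -> R,
        (forall t x, Dom T t -> deriv_within (Dom T) (fun s => f s x) t (ft t x)) /\
        (forall t x, Dom T t -> derivable_pt_lim (fun y => f t y) x (fx t x)) /\
        Ck T k' ft /\ Ck T k' fx
  end.

Definition smooth_on (T : R) (f : R -> R -> R) : Prop := forall k, Ck T k f.

Inductive idx : Set := Th | Rr.

Definition sum2 (F : idx -> R) : R := F Th + F Rr.

Definition partial (i : idx) (f : R -> R -> R) (th r l : R) : Prop :=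
  match i with
  | Th => derivable_pt_lim (fun a => f a r) th l
  | Rr => derivable_pt_lim (fun b => f th b) r l
  end.

Definition g (a b : idx) (r : R) : R :=
  match a, b with
  | Th, Th => r ^ 2
  | Rr, Rr => 1
  | _, _ => 0
  end.

Definition ginv (a b : idx) (r : R) : R :=
  match a, b with
  | Th, Th => / (r ^ 2)
  | Rr, Rr => 1
  | _, _ => 0
  end.

Definition dg (m a b : idx) (r : R) : R :=
  match m with
  | Th => 0
  | Rr => match a, b with Th, Th => 2 * r | _, _ => 0 end
  end.

Lemma dg_spec : forall m a b th r,
  partial m (fun _ y => g a b y) th r (dg m a b r).
Proof.
  intros m a b th r; destruct m; unfold partial.
  - apply derivable_pt_lim_const.
  - destruct a, b; unfold g, dg; try apply derivable_pt_lim_const.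
    replace (2 * r) with (INR 2 * r ^ (2 - 1)) by (simpl; ring).
    apply (derivable_pt_lim_pow r 2).
Qed.

Lemma ginv_spec : forall a c r, 0 < r ->
  sum2 (fun b => ginv a b r * g b c r) = if (match a, c with Th, Th | Rr, Rr => true | _, _ => false end) then 1 else 0.
Proof.
  intros a c r Hr; destruct a, c; unfold sum2; simpl; try ring.
  field; lra.
Qed.

(** Christoffel symbols of the Levi-Civita connection of h:
    Gamma^k_{ij} = 1/2 g^{kl} (d_i g_{jl} + d_j g_{il} - d_l g_{ij}). *)
Definition Gam (k i j : idx) (r : R) : R :=
  / 2 * sum2 (fun l => ginv k l r * (dg i j l r + dg j i l r - dg l i j r)).

(** Riemannian (Euclidean) area density in these coordinates: r dr dtheta. *)
Definition vol (r : R) : R := r.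

Definition rho (r : R) : R := / (r ^ 4).

(** The vector field v = u d_theta + (r/2) (d_theta u) d_r, given u and
    ux = d_theta u. *)
Definition vfield (u ux : R -> R -> R) (t th r : R) (k : idx) : R :=
  match k with
  | Th => u t th
  | Rr => r / 2 * ux t th
  end.

(* The pressure is p = -(r^2/4) (d_t u_x + u u_xx + u_x^2/2 - 2 u^2).  For the
   polar metric the only Christoffel symbols are Gamma^th_{th r} = 1/r and
   Gamma^r_{th th} = -r, so the radial component of d_t v + nabla_v v + grad p
   vanishes identically, while its angular component is exactly the
   Camassa-Holm equation.  The weighted field r^-3 v has zero divergence since
   d_th (r^-3 u) = - d_r (r^-2 u_x / 2).  The only analytic input is
   d_t (u_x) = (d_t u)_x, needed for the time derivative of the radial component;
   it follows from the continuity of the mixed derivative by a double mean value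
   argument. *)

From Stdlib Require Import Reals Lra FunctionalExtensionality.
From Coquelicot Require Import Coquelicot.
Open Scope R_scope.

Section TimeDerivative.

Variable T : R.

Lemma deriv_within_unique f t l1 l2 : Dom T t ->
  deriv_within (Dom T) f t l1 -> deriv_within (Dom T) f t l2 -> l1 = l2.
Proof.
  intros [Ht0 HtT] D1 D2.
  destruct (Req_dec l1 l2) as [|Hne]; auto; exfalso.
  set (e := Rabs (l1 - l2) / 2).
  assert (He : 0 < e) by (unfold e; assert (0 < Rabs (l1 - l2)) by (apply Rabs_pos_lt; lra); lra).
  destruct (D1 _ He) as [d1 [Hd1 P1]]; destruct (D2 _ He) as [d2 [Hd2 P2]].
  set (h := Rmin (Rmin d1 d2) (T - t) / 2).
  assert (Hmin : 0 < Rmin (Rmin d1 d2) (T - t)) by (repeat apply Rmin_pos; lra).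
  pose proof (Rmin_l (Rmin d1 d2) (T - t)); pose proof (Rmin_r (Rmin d1 d2) (T - t)).
  pose proof (Rmin_l d1 d2); pose proof (Rmin_r d1 d2).
  assert (Habs : Rabs h = h) by (apply Rabs_pos_eq; unfold h; lra).
  assert (Dh : Dom T (t + h)) by (unfold Dom, h; lra).
  specialize (P1 h ltac:(unfold h; lra) Dh ltac:(rewrite Habs; unfold h; lra)).
  specialize (P2 h ltac:(unfold h; lra) Dh ltac:(rewrite Habs; unfold h; lra)).
  set (q := (f (t + h) - f t) / h) in *.
  assert (Rabs (l1 - l2) <= Rabs (q - l1) + Rabs (q - l2)).
  { replace (l1 - l2) with (- (q - l1) + (q - l2)) by ring.
    rewrite <- (Rabs_Ropp (q - l1)); apply Rabs_triang. }
  unfold e in *; lra.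
Qed.

Lemma deriv_within_continuous f s l : Dom T s -> deriv_within (Dom T) f s l ->
  forall eps, 0 < eps -> exists d, 0 < d /\
    forall y, Dom T y -> Rabs (y - s) < d -> Rabs (f y - f s) < eps.
Proof.
  intros Ds D eps He.
  destruct (D 1 ltac:(lra)) as [d1 [Hd1 P]].
  set (M := Rabs l + 1).
  assert (HM : 0 < M) by (unfold M; pose proof (Rabs_pos l); lra).
  exists (Rmin d1 (eps / M)); split.
  { apply Rmin_pos; [lra | apply Rdiv_lt_0_compat; lra]. }
  intros y Dy Hy.
  destruct (Req_dec y s) as [->|Hne].
  { rewrite Rminus_diag, Rabs_R0; lra. }
  pose proof (Rmin_l d1 (eps / M)); pose proof (Rmin_r d1 (eps / M)).
  specialize (P (y - s) ltac:(lra) ltac:(replace (s + (y - s)) with y by ring; exact Dy)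
                ltac:(lra)).
  replace (s + (y - s)) with y in P by ring.
  set (q := (f y - f s) / (y - s)) in *.
  assert (Hq : Rabs q < M).
  { replace q with ((q - l) + l) by ring.
    eapply Rle_lt_trans; [apply Rabs_triang | unfold M; lra]. }
  replace (f y - f s) with (q * (y - s)) by (unfold q; field; lra).
  rewrite Rabs_mult.
  apply Rlt_le_trans with (M * (eps / M)); [| right; field; lra].
  apply Rmult_le_0_lt_compat; try apply Rabs_pos; lra.
Qed.

Lemma deriv_within_minus f1 f2 l1 l2 t :
  deriv_within (Dom T) f1 t l1 -> deriv_within (Dom T) f2 t l2 ->
  deriv_within (Dom T) (fun s => f1 s - f2 s) t (l1 - l2).
Proof.
  intros H1 H2 eps He.
  destruct (H1 (eps / 2) ltac:(lra)) as [d1 [Hd1 P1]].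
  destruct (H2 (eps / 2) ltac:(lra)) as [d2 [Hd2 P2]].
  exists (Rmin d1 d2); split; [apply Rmin_pos; lra|].
  intros h hn Dh Hh.
  pose proof (Rmin_l d1 d2); pose proof (Rmin_r d1 d2).
  specialize (P1 h hn Dh ltac:(lra)); specialize (P2 h hn Dh ltac:(lra)).
  replace ((f1 (t + h) - f2 (t + h) - (f1 t - f2 t)) / h - (l1 - l2))
    with (((f1 (t + h) - f1 t) / h - l1) - ((f2 (t + h) - f2 t) / h - l2))
    by (field; lra).
  eapply Rle_lt_trans; [apply Rabs_triang|]; rewrite Rabs_Ropp; lra.
Qed.

Lemma deriv_within_scal c f l t : deriv_within (Dom T) f t l ->
  deriv_within (Dom T) (fun s => c * f s) t (c * l).
Proof.
  intros H eps He.
  set (M := Rabs c + 1).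
  assert (HM : 0 < M) by (unfold M; pose proof (Rabs_pos c); lra).
  destruct (H (eps / M)) as [d [Hd P]]; [apply Rdiv_lt_0_compat; lra|].
  exists d; split; auto; intros h hn Dh Hh.
  specialize (P h hn Dh Hh).
  replace ((c * f (t + h) - c * f t) / h - c * l)
    with (c * ((f (t + h) - f t) / h - l)) by (field; lra).
  rewrite Rabs_mult.
  apply Rle_lt_trans with (Rabs c * (eps / M)).
  { apply Rmult_le_compat_l; [apply Rabs_pos | lra]. }
  apply Rlt_le_trans with (M * (eps / M)); [| right; field; lra].
  apply Rmult_lt_compat_r; [apply Rdiv_lt_0_compat|unfold M]; lra.
Qed.

(* Clamping at m = min a b keeps f continuous at the left endpoint even when
   that endpoint is 0. *)
Lemma deriv_within_MVT f f' a b : Dom T a -> Dom T b ->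
  (forall s, Dom T s -> deriv_within (Dom T) f s (f' s)) ->
  exists c, Rmin a b <= c <= Rmax a b /\ f b - f a = f' c * (b - a).
Proof.
  intros Da Db Hd.
  pose proof (Rmin_l a b); pose proof (Rmin_r a b).
  set (m := Rmin a b); set (M := Rmax a b).
  assert (Dm : Dom T m) by (unfold m, Rmin; destruct Rle_dec; auto).
  assert (DM : Dom T M) by (unfold M, Rmax; destruct Rle_dec; auto).
  set (F := fun s => f (Rmax m s)).
  destruct (MVT_gen F a b f') as [c [Hc E]].
  - intros x Hx; fold m M in Hx; apply is_derive_Reals.
    assert (Dx : Dom T x) by (unfold Dom in *; lra).
    apply (derivable_pt_lim_locally_ext f F x m T); [unfold Dom in *; lra| |].
    { intros z Hz; unfold F; rewrite Rmax_right; lra. }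
    intros eps He; destruct (Hd x Dx eps He) as [d [Hd0 P]].
    set (d' := Rmin d (Rmin (x - m) (T - x))).
    assert (Hd' : 0 < d') by (unfold d'; repeat apply Rmin_pos; unfold Dom in *; lra).
    pose proof (Rmin_l d (Rmin (x - m) (T - x))).
    pose proof (Rmin_r d (Rmin (x - m) (T - x))).
    pose proof (Rmin_l (x - m) (T - x)); pose proof (Rmin_r (x - m) (T - x)).
    exists (mkposreal d' Hd'); simpl; intros h Hh0 Hh.
    apply P; auto; [| unfold d' in *; lra].
    apply Rabs_def2 in Hh; unfold d', Dom in *; lra.
  - intros x Hx; fold m M in Hx.
    assert (Dx : Dom T x) by (unfold Dom in *; lra).
    intros eps He.
    destruct (deriv_within_continuous f x (f' x) Dx (Hd x Dx) eps He) as [d [Hd0 P]].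
    exists (Rmin d (T - x)); split; [apply Rmin_pos; unfold Dom in *; lra|].
    intros y [_ Hy]; simpl in Hy; unfold R_dist in *.
    pose proof (Rmin_l d (T - x)); pose proof (Rmin_r d (T - x)).
    apply Rabs_def2 in Hy.
    unfold F; rewrite (Rmax_right m x) by lra.
    pose proof (Rmax_l m y); pose proof (Rmax_r m y).
    apply P.
    + unfold Dom in *; unfold Rmax; destruct Rle_dec; lra.
    + unfold Rmax; destruct Rle_dec; apply Rabs_def1; lra.
  - exists c; split; auto.
    unfold F in E; rewrite !Rmax_right in E by (unfold m; lra); exact E.
Qed.

End TimeDerivative.

Section MixedPartials.

Variables (T : R) (u ut ux utx : R -> R -> R).
Hypothesis Hut : forall t x, Dom T t -> deriv_within (Dom T) (fun s => u s x) t (ut t x).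
Hypothesis Hux : forall t x, Dom T t -> derivable_pt_lim (u t) x (ux t x).
Hypothesis Hutx : forall t x, Dom T t -> derivable_pt_lim (ut t) x (utx t x).
Hypothesis Hutx_cont : jcont T utx.

Lemma second_difference_mean_value t h x k : Dom T t -> Dom T (t + h) -> 0 < k ->
  exists c xi, Dom T c /\ Rabs (c - t) <= Rabs h /\ x <= xi <= x + k /\
    (u (t + h) (x + k) - u (t + h) x) - (u t (x + k) - u t x) = utx c xi * k * h.
Proof.
  intros Dt Dth Hk.
  destruct (deriv_within_MVT T (fun s => u s (x + k) - u s x)
              (fun s => ut s (x + k) - ut s x) t (t + h) Dt Dth) as [c [Hct Ec]].
  { intros s Ds; apply deriv_within_minus; auto. }
  assert (Dc : Dom T c).
  { unfold Dom in *; unfold Rmin, Rmax in Hct; destruct Rle_dec; lra. }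
  destruct (MVT_gen (ut c) x (x + k) (utx c)) as [xi [Hxi Exi]].
  { intros y _; apply is_derive_Reals, Hutx, Dc. }
  { intros y _; apply derivable_continuous_pt; exists (utx c y); apply Hutx, Dc. }
  rewrite Rmin_left, Rmax_right in Hxi by lra.
  exists c, xi; split; [exact Dc | split; [| split; [exact Hxi |]]].
  - unfold Rmin, Rmax in Hct; unfold Rabs.
    destruct (Rle_dec t (t + h)), (Rcase_abs (c - t)), (Rcase_abs h); lra.
  - replace (t + h - t) with h in Ec by ring.
    replace (x + k - x) with k in Exi by ring.
    rewrite Exi in Ec; lra.
Qed.

(* Dividing the second difference by k h and letting k -> 0 first, at a
   scale depending on h, leaves utx at a point near (t, x); joint continuity
   of utx concludes. *)
Lemma deriv_within_mixed_swap t x : Dom T t ->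
  deriv_within (Dom T) (fun s => ux s x) t (utx t x).
Proof.
  intros Dt eps He.
  destruct (Hutx_cont t x Dt (eps / 2) ltac:(lra)) as [d [Hd Pd]].
  exists d; split; auto; intros h hn Dth Hh.
  assert (Hah : 0 < Rabs h) by (apply Rabs_pos_lt; auto).
  set (e := Rabs h * eps / 8).
  assert (He' : 0 < e) by (unfold e; apply Rdiv_lt_0_compat; [apply Rmult_lt_0_compat|]; lra).
  destruct (Hux (t + h) x Dth e He') as [d1 P1].
  destruct (Hux t x Dt e He') as [d2 P2].
  set (k := Rmin d (Rmin d1 d2) / 2).
  assert (Hm : 0 < Rmin d (Rmin d1 d2)) by (repeat apply Rmin_pos; auto; apply cond_pos).
  pose proof (Rmin_l d (Rmin d1 d2)); pose proof (Rmin_r d (Rmin d1 d2)).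
  pose proof (Rmin_l d1 d2); pose proof (Rmin_r d1 d2).
  assert (Hk : 0 < k) by (unfold k; lra).
  assert (Hak : Rabs k = k) by (apply Rabs_pos_eq; lra).
  specialize (P1 k ltac:(lra) ltac:(rewrite Hak; unfold k; lra)).
  specialize (P2 k ltac:(lra) ltac:(rewrite Hak; unfold k; lra)).
  destruct (second_difference_mean_value t h x k Dt Dth Hk)
    as [c [xi [Dc [Hct [Hxi E]]]]].
  assert (Hc : Rabs (utx c xi - utx t x) < eps / 2).
  { apply Pd; auto; [lra|]. apply Rabs_def1; unfold k in *; lra. }
  set (Q := fun s => (u s (x + k) - u s x) / k).
  change ((u t (x + k) - u t x) / k) with (Q t) in P2.
  change ((u (t + h) (x + k) - u (t + h) x) / k) with (Q (t + h)) in P1.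
  assert (EQ : utx c xi = (Q (t + h) - Q t) / h).
  { unfold Q; replace (utx c xi) with (utx c xi * k * h / (k * h)) by (field; lra).
    rewrite <- E; field; lra. }
  replace ((ux (t + h) x - ux t x) / h - utx t x)
    with ((utx c xi - utx t x) + ((Q t - ux t x) - (Q (t + h) - ux (t + h) x)) / h)
    by (rewrite EQ; field; lra).
  assert (Herr : Rabs ((Q t - ux t x) - (Q (t + h) - ux (t + h) x)) < 2 * e).
  { eapply Rle_lt_trans; [apply Rabs_triang|]; rewrite Rabs_Ropp; lra. }
  eapply Rle_lt_trans; [apply Rabs_triang|].
  unfold Rdiv at 1; rewrite Rabs_mult, Rabs_inv.
  assert (Rabs ((Q t - ux t x) - (Q (t + h) - ux (t + h) x)) * / Rabs h < eps / 2).
  { apply (Rmult_lt_reg_r (Rabs h)); auto.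
    rewrite Rmult_assoc, Rinv_l, Rmult_1_r by lra; unfold e in *; nra. }
  lra.
Qed.

End MixedPartials.

Lemma jcont_ext T f f' : (forall t x, Dom T t -> f t x = f' t x) ->
  jcont T f -> jcont T f'.
Proof.
  intros E Hf t x Dt eps He.
  destruct (Hf t x Dt eps He) as [d [Hd P]].
  exists d; split; auto; intros s y Ds Hs Hy.
  rewrite <- !E; auto.
Qed.

Lemma smooth_mixed_jcont T u ut utx : smooth_on T u ->
  (forall t x, Dom T t -> deriv_within (Dom T) (fun s => u s x) t (ut t x)) ->
  (forall t x, Dom T t -> derivable_pt_lim (ut t) x (utx t x)) ->
  jcont T utx.
Proof.
  intros Hs Hut Hutx.
  destruct (Hs 2%nat) as [_ [ft [fx [Hft [_ [[_ [ftt [ftx [_ [Hftx [_ Hftx_cont]]]]]] _]]]]]].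
  assert (Eft : forall t x, Dom T t -> ft t x = ut t x).
  { intros t x Dt; apply (deriv_within_unique T (fun s => u s x) t); auto. }
  apply (jcont_ext T ftx); auto.
  intros t x Dt; apply (uniqueness_limite (ut t) x); auto.
  apply (derivable_pt_lim_ext (ft t)); auto.
Qed.

Lemma derivable_pt_lim_periodic f c x l : (forall y, f (y + c) = f y) ->
  derivable_pt_lim f x l -> derivable_pt_lim f (x + c) l.
Proof.
  intros Hp H eps He; destruct (H eps He) as [d P].
  exists d; intros h hn Hh.
  replace (x + c + h) with (x + h + c) by ring; rewrite !Hp; auto.
Qed.

Lemma derivative_periodic f f' c : (forall y, f (y + c) = f y) ->
  (forall y, derivable_pt_lim f y (f' y)) -> forall y, f' (y + c) = f' y.
Proof.
  intros Hp Hd y; apply (uniqueness_limite f (y + c)); auto.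
  apply derivable_pt_lim_periodic; auto.
Qed.

Lemma deriv_within_periodic T u ut c : (forall t x, u t (x + c) = u t x) ->
  (forall t x, Dom T t -> deriv_within (Dom T) (fun s => u s x) t (ut t x)) ->
  forall t x, Dom T t -> ut t (x + c) = ut t x.
Proof.
  intros Hp Hut t x Dt.
  apply (deriv_within_unique T (fun s => u s x) t); auto.
  replace (fun s => u s x) with (fun s => u s (x + c))
    by (apply functional_extensionality; auto).
  auto.
Qed.

Ltac derive_from_hyps :=
  auto_derive;
  repeat match goal with
  | |- True => exact I
  | |- _ /\ _ => split
  | |- ex_derive _ _ => eexists; apply is_derive_Reals; eauto
  | |- context [Derive ?F ?x] =>
      erewrite (is_derive_unique F x) by (apply is_derive_Reals; eauto)
  end.

Definition ch_pressure_coeff (u ux uxx utx : R -> R -> R) (t th : R) : R :=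
  utx t th + u t th * uxx t th + ux t th ^ 2 / 2 - 2 * u t th ^ 2.

Definition ch_pressure_coeff_dx (u ux uxx uxxx utxx : R -> R -> R) (t th : R) : R :=
  utxx t th + 2 * ux t th * uxx t th + u t th * uxxx t th - 4 * u t th * ux t th.

(* Outside [0,T) the derivatives of u are unconstrained, so the pressure is set
   to 0 there to keep it 2pi-periodic at every time. *)
Definition ch_pressure (T : R) (u ux uxx utx : R -> R -> R) (t th r : R) : R :=
  if Rle_dec 0 t then
    if Rlt_dec t T then - r ^ 2 / 4 * ch_pressure_coeff u ux uxx utx t th else 0
  else 0.

Definition ch_pressure_grad (u ux uxx uxxx utx utxx : R -> R -> R) (t th r : R)
  (i : idx) : R :=
  match i with
  | Th => - r ^ 2 / 4 * ch_pressure_coeff_dx u ux uxx uxxx utxx t th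
  | Rr => - r / 2 * ch_pressure_coeff u ux uxx utx t th
  end.

Definition vfield_jacobian (ux uxx : R -> R -> R) (t th r : R) (i k : idx) : R :=
  match i with
  | Th => vfield ux uxx t th r k
  | Rr => match k with Th => 0 | Rr => ux t th / 2 end
  end.

Definition mass_flux_partial (ux : R -> R -> R) (t th r : R) (i : idx) : R :=
  match i with
  | Th => ux t th / r ^ 3
  | Rr => - ux t th / r ^ 3
  end.

Section CamassaHolmEuler.

Variables (T : R) (u ut ux uxx uxxx utx utxx : R -> R -> R).
Hypothesis Hut : forall t x, Dom T t -> deriv_within (Dom T) (fun s => u s x) t (ut t x).
Hypothesis Hux : forall t x, Dom T t -> derivable_pt_lim (u t) x (ux t x).
Hypothesis Huxx : forall t x, Dom T t -> derivable_pt_lim (ux t) x (uxx t x).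
Hypothesis Huxxx : forall t x, Dom T t -> derivable_pt_lim (uxx t) x (uxxx t x).
Hypothesis Hutx : forall t x, Dom T t -> derivable_pt_lim (ut t) x (utx t x).
Hypothesis Hutxx : forall t x, Dom T t -> derivable_pt_lim (utx t) x (utxx t x).

Lemma ch_pressure_periodic c : (forall t x, u t (x + c) = u t x) ->
  forall t th r, ch_pressure T u ux uxx utx t (th + c) r = ch_pressure T u ux uxx utx t th r.
Proof.
  intros Hp t th r; unfold ch_pressure.
  destruct (Rle_dec 0 t); [destruct (Rlt_dec t T)|]; auto.
  assert (Dt : Dom T t) by (split; lra).
  assert (Pux : forall x, ux t (x + c) = ux t x).
  { apply (derivative_periodic (u t)); auto. }
  assert (Puxx : forall x, uxx t (x + c) = uxx t x).
  { apply (derivative_periodic (ux t)); auto. }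
  assert (Put : forall t x, Dom T t -> ut t (x + c) = ut t x).
  { apply (deriv_within_periodic T u); auto. }
  assert (Putx : forall x, utx t (x + c) = utx t x).
  { apply (derivative_periodic (ut t)); auto. }
  unfold ch_pressure_coeff; rewrite Hp, Pux, Puxx, Putx; reflexivity.
Qed.

Lemma derivable_pt_lim_ch_pressure_coeff t th : Dom T t ->
  derivable_pt_lim (ch_pressure_coeff u ux uxx utx t) th
    (ch_pressure_coeff_dx u ux uxx uxxx utxx t th).
Proof.
  intros Dt; apply is_derive_Reals; unfold ch_pressure_coeff, ch_pressure_coeff_dx.
  derive_from_hyps; field.
Qed.

Lemma ch_pressure_partial t th r i : Dom T t ->
  partial i (ch_pressure T u ux uxx utx t) th r
    (ch_pressure_grad u ux uxx uxxx utx utxx t th r i).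
Proof.
  intros Dt.
  assert (Ep : forall a b, ch_pressure T u ux uxx utx t a b
                           = - b ^ 2 / 4 * ch_pressure_coeff u ux uxx utx t a).
  { intros a b; unfold ch_pressure; destruct Dt.
    destruct (Rle_dec 0 t); [destruct (Rlt_dec t T)|]; lra. }
  pose proof (derivable_pt_lim_ch_pressure_coeff t th Dt) as DG.
  destruct i; simpl; eapply derivable_pt_lim_ext; try (intros; symmetry; apply Ep);
    apply is_derive_Reals.
  - derive_from_hyps; field.
  - auto_derive; auto; field.
Qed.

Hypothesis Hux_dt : forall t x, Dom T t ->
  deriv_within (Dom T) (fun s => ux s x) t (utx t x).

Lemma vfield_deriv_time t th r k : Dom T t ->
  deriv_within (Dom T) (fun s => vfield u ux s th r k) t (vfield ut utx t th r k).
Proof.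
  intros Dt; destruct k; simpl; [apply Hut | apply deriv_within_scal, Hux_dt]; auto.
Qed.

Lemma vfield_partial t th r i k : Dom T t ->
  partial i (fun a b => vfield u ux t a b k) th r (vfield_jacobian ux uxx t th r i k).
Proof.
  intros Dt; destruct i, k; simpl.
  - eapply Hux; eauto.
  - apply is_derive_Reals; derive_from_hyps; field.
  - apply derivable_pt_lim_const.
  - apply is_derive_Reals; auto_derive; auto; field.
Qed.

Lemma mass_flux_partial_spec t th r i : Dom T t -> 0 < r ->
  partial i (fun a b => vol b * (rho b * vfield u ux t a b i)) th r
    (mass_flux_partial ux t th r i).
Proof.
  intros Dt Hr; destruct i; simpl; unfold vol, rho; apply is_derive_Reals.
  - derive_from_hyps; field; lra.
  - auto_derive; [repeat apply Rmult_integral_contrapositive_currified; lra|].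
    field; lra.
Qed.

End CamassaHolmEuler.

(* The radial component holds by the choice of the pressure; the angular
   component is the Camassa-Holm equation. *)
Lemma ch_euler_momentum (u ut ux uxx uxxx utx utxx : R -> R -> R) t th r k : 0 < r ->
  ut t th - / 4 * utxx t th + 3 * ux t th * u t th
    - / 2 * uxx t th * ux t th - / 4 * uxxx t th * u t th = 0 ->
  vfield ut utx t th r k
    + sum2 (fun i => vfield u ux t th r i * vfield_jacobian ux uxx t th r i k)
    + sum2 (fun i => sum2 (fun j =>
         Gam k i j r * vfield u ux t th r i * vfield u ux t th r j))
  = - sum2 (fun l => ginv k l r * ch_pressure_grad u ux uxx uxxx utx utxx t th r l).
Proof.
  intros Hr HCH.
  destruct k; unfold Gam, sum2, ginv, dg, vfield, vfield_jacobian, ch_pressure_grad,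
    ch_pressure_coeff, ch_pressure_coeff_dx; simpl.
  - transitivity (ut t th + 2 * u t th * ux t th); [field; lra|].
    transitivity ((utxx t th + 2 * ux t th * uxx t th + u t th * uxxx t th
                   - 4 * u t th * ux t th) / 4); [lra | field; lra].
  - field; lra.
Qed.

Lemma mass_flux_divergence_free ux t th r : 0 < r ->
  / vol r * sum2 (mass_flux_partial ux t th r) = 0.
Proof. intros Hr; unfold sum2, mass_flux_partial, vol; field; lra. Qed.

Theorem theorem1p1 (T : R) (u ut ux uxx uxxx utx utxx : R -> R -> R)
  (Hsmooth : smooth_on T u)
  (Hper : forall t x, u t (x + 2 * PI) = u t x)
  (Hut : forall t x, Dom T t -> deriv_within (Dom T) (fun s => u s x) t (ut t x))
  (Hux : forall t x, Dom T t -> derivable_pt_lim (u t) x (ux t x))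
  (Huxx : forall t x, Dom T t -> derivable_pt_lim (ux t) x (uxx t x))
  (Huxxx : forall t x, Dom T t -> derivable_pt_lim (uxx t) x (uxxx t x))
  (Hutx : forall t x, Dom T t -> derivable_pt_lim (ut t) x (utx t x))
  (Hutxx : forall t x, Dom T t -> derivable_pt_lim (utx t) x (utxx t x))
  (HCH : forall t x, Dom T t ->
     ut t x - / 4 * utxx t x + 3 * ux t x * u t x
       - / 2 * uxx t x * ux t x - / 4 * uxxx t x * u t x = 0) :
  exists p : R -> R -> R -> R,
    (forall t th r, p t (th + 2 * PI) r = p t th r) /\
    forall t th r, Dom T t -> 0 < r ->
      exists (dtv : idx -> R) (dv : idx -> idx -> R) (dp : idx -> R) (ddiv : idx -> R),
        (forall k, deriv_within (Dom T) (fun s => vfield u ux s th r k) t (dtv k)) /\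
        (forall i k, partial i (fun a b => vfield u ux t a b k) th r (dv i k)) /\
        (forall i, partial i (p t) th r (dp i)) /\
        (forall i, partial i (fun a b => vol b * (rho b * vfield u ux t a b i)) th r (ddiv i)) /\
        (* d_t v + nabla_v v = - grad p *)
        (forall k,
           dtv k + sum2 (fun i => vfield u ux t th r i * dv i k)
                 + sum2 (fun i => sum2 (fun j =>
                      Gam k i j r * vfield u ux t th r i * vfield u ux t th r j))
           = - sum2 (fun l => ginv k l r * dp l)) /\
        (* div (rho v) = 0 *)
        / vol r * sum2 ddiv = 0.
Proof.
  pose proof (deriv_within_mixed_swap T u ut ux utx Hut Hux Hutx
                (smooth_mixed_jcont T u ut utx Hsmooth Hut Hutx)) as Hux_dt.
  exists (ch_pressure T u ux uxx utx); split.
  { eapply ch_pressure_periodic; eauto. }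
  intros t th r Dt Hr.
  exists (vfield ut utx t th r), (vfield_jacobian ux uxx t th r),
    (ch_pressure_grad u ux uxx uxxx utx utxx t th r), (mass_flux_partial ux t th r).
  split; [|split; [|split; [|split; [|split]]]]; intros.
  - eapply vfield_deriv_time; eauto.
  - eapply vfield_partial; eauto.
  - eapply ch_pressure_partial; eauto.
  - eapply mass_flux_partial_spec; eauto.
  - eapply ch_euler_momentum; eauto.
  - eapply mass_flux_divergence_free; eauto.
Qed.
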